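(* Let $p$ be an odd prime, $n\ge1$, $G=\mu_{p^n}$, $\alpha$ an integer whose class generates $(\mathbb{Z}/p^n\mathbb{Z})^\times$, and $\mathcal{P}$ a unital partition of $G$. Let $0\le k\le n$, $A\in\mathcal{P}_k$, $y\in A\cap B_k$, and let $u_k$ be the smallest positive integer with $y^{\alpha^{u_k}}\in A$. Then $u_k$ divides $\phi(p^{n-k})$.
   Context: A unital partition of a finite commutative group $G$ is a partition $G=\{1\}\sqcup A_0\sqcup\dots\sqcup A_s$ such that, with $a_i=\sum_{x\in A_i}x\in\mathbb{Z}[G]$, the $\mathbb{Z}$-span of $1$ and the $a_i$ is closed under multiplication in $\mathbb{Z}[G]$. $B_k=\{x^{p^k}\mid x\text{ a generator of }G\}$, $\mathcal{P}_k=\{A\in\mathcal{P}\mid A\cap B_k\neq\emptyset\}$, and $\phi$ is Euler's totient function. *)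

From HB Require Import structures.
From mathcomp Require Import all_boot all_order all_algebra all_fingroup all_solvable.
Set Implicit Arguments. Unset Strict Implicit. Unset Printing Implicit Defensive.
Import GRing.Theory Num.Theory.

Section GroupRing.
Variable gT : finGroupType.
Variable G : {group gT}.

(* Elements of Z[G] are represented as functions gT -> int (supported on G). *)
Definition grmul (f g : gT -> int) : gT -> int :=
  fun z => (\sum_(x in G) f x * g ((x^-1)%g * z)%g)%R.

Definition grsum (A : {set gT}) : gT -> int := fun z => ((z \in A) : int).

Definition grone : gT -> int := fun z => ((z == 1%g) : int).

Definition in_span (P : {set {set gT}}) (f : gT -> int) : Prop :=
  exists (c0 : int) (c : {set gT} -> int),
    forall z : gT, f z = (c0 * grone z + \sum_(A in P) c A * grsum A z)%R.

Definition unital_partition (P : {set {set gT}}) : Prop :=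
  partition P (G :\ 1%g) /\
  forall f g, in_span P f -> in_span P g -> in_span P (grmul f g).

Definition Bset (p k : nat) : {set gT} :=
  [set (x ^+ (p ^ k))%g | x in G & generator G x].

Definition Pk (P : {set {set gT}}) (p k : nat) : {set {set gT}} :=
  [set A in P | A :&: Bset p k != set0].

End GroupRing.

Definition zpow (gT : finGroupType) (N : nat) (y : gT) (m : int) : gT :=
  (y ^+ `|(m %% (N%:Z))%Z|%N)%g.

Definition generates_units (N : nat) (alpha : int) : Prop :=
  coprimez alpha N%:Z /\
  forall b : int, coprimez b N%:Z -> exists j : nat, (b = alpha ^+ j %[mod N%:Z])%Z.

From HB Require Import structures.
From mathcomp Require Import all_boot all_order all_algebra all_fingroup all_solvable.
Set Implicit Arguments. Unset Strict Implicit. Unset Printing Implicit Defensive.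
Import GRing.Theory.

(* Blocks of a unital partition are permuted by the power maps x |-> x^m,
   m coprime to |G|; this forces the orbit length of a block to divide phi.

   For a block B and a prime q coprime to |G|, the group-ring power
   a_B^q lies in the span of the partition, hence its coefficients are
   constant on every block.  The coefficient of z in a_B^q counts the
   q-tuples of elements of B with product z; the cyclic group Z/q acts on
   these tuples by rotation (G is abelian), and counting fixed points gives
   the Frobenius congruence  a_B^q = a_{B^(q)} (mod q), where
   B^(q) = {x^q | x in B}.  Since x |-> x^q is injective, a_{B^(q)} is a
   0/1 function, so B^(q) is a union of blocks.  Factoring m into primes,
   the same holds for B^(m).  If moreover B^(m) meets B, then B^(m) = B by
   counting.  Finally, for y in A and m = alpha^u, the relation
   alpha^phi(p^(n-k)) = 1 on the order p^(n-k) of y, together with the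
   minimality of u, yields u | phi(p^(n-k)). *)

Section TupleCount.
Variables (gT : finGroupType) (X : {set gT}).

Definition prod_tuples j (z : gT) : {set {ffun 'I_j -> gT}} :=
  [set t : {ffun 'I_j -> gT} | [forall i, t i \in X] && ((\prod_(i < j) t i)%g == z)].

Definition cons_tuple j (u : gT * {ffun 'I_j -> gT}) : {ffun 'I_j.+1 -> gT} :=
  [ffun i => if unlift ord0 i is Some i' then u.2 i' else u.1].

Lemma cons_tuple_in j x t z :
  (cons_tuple (x, t) \in prod_tuples j.+1 z) =
  (x \in X) && (t \in prod_tuples j (x^-1 * z)%g).
Proof.
rewrite !inE big_ord_recl !ffunE unlift_none /=.
have -> : (\prod_(i < j) cons_tuple (x, t) (lift ord0 i))%g = (\prod_(i < j) t i)%g.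
  by apply: eq_bigr => i _; rewrite ffunE liftK.
have -> : ((x * \prod_(i < j) t i)%g == z) = ((\prod_(i < j) t i)%g == (x^-1 * z)%g).
  by apply/eqP/eqP => [<-|->]; [rewrite mulKg | rewrite mulKVg].
case: (boolP (x \in X)) => xX /=; last first.
  apply/negbTE/negP => /andP[/forallP Xt _].
  by have := Xt ord0; rewrite ffunE unlift_none (negbTE xX).
congr (_ && _); apply/forallP/forallP => Xt i.
  by have := Xt (lift ord0 i); rewrite ffunE liftK.
by rewrite ffunE; case: unliftP => [i' _|_]; [exact: Xt | exact: xX].
Qed.

Lemma card_prod_tuplesS j z :
  #|prod_tuples j.+1 z| = \sum_(x in X) #|prod_tuples j (x^-1 * z)%g|.
Proof.
pose uncons (t : {ffun 'I_j.+1 -> gT}) := (t ord0, [ffun i => t (lift ord0 i)]).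
have consK : cancel uncons (@cons_tuple j).
  move=> t; apply/ffunP=> i; rewrite ffunE /=.
  by case: unliftP => [i' ->|->]; rewrite ?ffunE.
have unconsK : cancel (@cons_tuple j) uncons.
  move=> [x t]; rewrite /uncons ffunE unlift_none; congr (_, _).
  by apply/ffunP=> i; rewrite !ffunE liftK.
rewrite -sum1_card (reindex (@cons_tuple j)) /=; last first.
  by exists uncons => u _; [apply: unconsK | apply: consK].
rewrite big_mkcond -(pair_bigA _ (fun x t =>
  if cons_tuple (x, t) \in prod_tuples j.+1 z then 1 else 0)) /=.
rewrite [RHS]big_mkcond; apply: eq_bigr => x _.
under eq_bigr do rewrite cons_tuple_in.
case: (x \in X) => /=; last by rewrite big1.
by rewrite -big_mkcond sum1_card.
Qed.

Lemma card_prod_tuples0 z : #|prod_tuples 0 z| = (z == 1%g).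
Proof.
rewrite -sum1_card; under eq_bigl do rewrite inE big_ord0.
case: (z =P 1%g) => [->|/eqP nz1].
  rewrite (eq_bigl predT) ?sum1_card ?card_ffun ?card_ord //.
  by move=> t; rewrite eqxx andbT; apply/forallP => -[].
by rewrite big_pred0 // => t; rewrite eq_sym (negbTE nz1) andbF.
Qed.
End TupleCount.

Section GroupRingPower.
Variables (gT : finGroupType) (G : {group gT}) (X : {set gT}).
Hypothesis sXG : X \subset G.

Fixpoint grpow j : gT -> int :=
  if j is j'.+1 then grmul G (grsum X) (grpow j') else @grone gT.

Lemma grpow_card j z : grpow j z = Posz #|prod_tuples X j z|.
Proof.
elim: j z => [|j IH] z /=; first by rewrite card_prod_tuples0.
rewrite card_prod_tuplesS /grmul; under [LHS]eq_bigr do rewrite IH.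
rewrite -natz natr_sum [RHS]big_mkcond [LHS]big_mkcond /=.
apply: eq_bigr => x _; rewrite /grsum natz.
case: (boolP (x \in X)) => xX; first by rewrite (subsetP sXG _ xX) mul1r.
by case: (x \in G); rewrite // mul0r.
Qed.
End GroupRingPower.

Section Rotation.
Variables (T : Type) (q : nat).

Definition rotate (t : {ffun 'I_q.+1 -> T}) (s : 'I_q.+1) : {ffun 'I_q.+1 -> T} :=
  [ffun i => t (i + s)%R].

Lemma rotate1 : rotate^~ 1%g =1 id.
Proof. by move=> t; apply/ffunP=> i; rewrite ffunE addr0. Qed.

Lemma rotateM : forall t, act_morph rotate t.
Proof.
move=> t a b; apply/ffunP=> i; rewrite !ffunE.
have -> : ((a * b)%g : 'I_q.+1) = (a + b)%R by [].
by rewrite addrA [(i + b + a)%R]addrAC.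
Qed.

Definition rotate_action := TotalAction rotate1 rotateM.
End Rotation.

Section RotatedProduct.
Variables (gT : finGroupType) (G : {group gT}) (r : nat).
Hypothesis abG : abelian G.

Lemma prod_rotate1 (t : {ffun 'I_r.+2 -> gT}) : (forall i, t i \in G) ->
  (\prod_(i < r.+2) t (i + 1)%R)%g = (\prod_(i < r.+2) t i)%g.
Proof.
move=> tG; rewrite [LHS]big_ord_recr [RHS]big_ord_recl /=.
have -> : (ord_max + 1)%R = ord0 :> 'I_r.+2.
  by apply: val_inj => /=; rewrite (modn_small (_ : 1 < r.+2)) // addn1 modnn.
rewrite (eq_bigr (fun i => t (lift ord0 i))); last first.
  move=> i _; congr (t _); apply: val_inj => /=.
  by rewrite (@modn_small 1) // addn1 modn_small // ltnS ltn_ord.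
have prodG : (\prod_(i < r.+1) t (lift ord0 i))%g \in G by apply: group_prod.
by have /centP -> := subsetP abG _ (tG ord0).
Qed.

Lemma prod_rotate (t : {ffun 'I_r.+2 -> gT}) (s : 'I_r.+2) : (forall i, t i \in G) ->
  (\prod_(i < r.+2) t (i + s)%R)%g = (\prod_(i < r.+2) t i)%g.
Proof.
move=> tG; rewrite -[s]valZpK -Zp_nat.
elim: (val s) t tG => [|k IH] t tG; first by under eq_bigr do rewrite addr0.
pose t' := [ffun i => t (i + k%:R)%R].
have t'G i : t' i \in G by rewrite ffunE.
rewrite -(IH t tG).
transitivity (\prod_(i < r.+2) t' (i + 1)%R)%g.
  by apply: eq_bigr => i _; rewrite ffunE -addrA -mulrS.
by rewrite prod_rotate1 //; apply: eq_bigr => i _; rewrite ffunE.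
Qed.
End RotatedProduct.

(* Frobenius congruence: for a prime q, the number of q-tuples over X with
   product z is congruent mod q to the number of q-th roots of z in X,
   the latter being the fixed points of the rotation action. *)
Section FrobeniusCongruence.
Variables (gT : finGroupType) (G : {group gT}) (X : {set gT}) (r : nat).
Hypotheses (abG : abelian G) (sXG : X \subset G) (prime_q : prime r.+2).

Lemma card_prod_tuples_mod z :
  #|prod_tuples X r.+2 z| = #|[set x in X | (x ^+ r.+2)%g == z]| %[mod r.+2].
Proof.
pose c x : {ffun 'I_r.+2 -> gT} := [ffun => x].
have prod_c x : (\prod_(i < r.+2) c x i)%g = (x ^+ r.+2)%g.
  by under eq_bigr do rewrite ffunE; rewrite prodg_const card_ord.
have fixE : ('Fix_(prod_tuples X r.+2 z | rotate_action gT r.+1)([set: 'I_r.+2]))%g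
            = c @: [set x in X | (x ^+ r.+2)%g == z].
  apply/setP => t; rewrite inE; apply/andP/imsetP => [[tS /afixP fixt]|].
    have tc : t = c (t ord0).
      apply/ffunP => i; rewrite ffunE.
      by have /(congr1 (fun f : {ffun _ -> _} => f ord0)) := fixt i (in_setT i);
        rewrite /= ffunE add0r.
    exists (t ord0) => //.
    move: tS; rewrite !inE => /andP[Xt /eqP <-].
    by rewrite (forallP Xt ord0) -prod_c -tc eqxx.
  case=> x; rewrite inE => /andP[xX /eqP xz] ->; split.
    by rewrite inE prod_c xz eqxx andbT; apply/forallP => i; rewrite ffunE.
  by apply/afixP => a _; apply/ffunP => i; rewrite /= !ffunE.
have acts : [acts [set: 'I_r.+2], on prod_tuples X r.+2 z | rotate_action gT r.+1].
  apply/actsP => a _ t /=; rewrite !inE.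
  have -> : [forall i, rotate t a i \in X] = [forall i, t i \in X].
    apply/forallP/forallP => Xt i; last by rewrite ffunE.
    by have := Xt (i - a)%R; rewrite ffunE subrK.
  case: (boolP [forall i, t i \in X]) => //= /forallP Xt.
  have tG i : t i \in G by exact: subsetP sXG _ (Xt i).
  by rewrite -(prod_rotate abG a tG); under eq_bigr do rewrite ffunE.
rewrite (pgroup_fix_mod _ acts) ?fixE ?card_imset //.
  by move=> x y /(congr1 (fun f : {ffun _ -> _} => f ord0)); rewrite !ffunE.
by rewrite /pgroup cardsT card_ord pnat_id.
Qed.
End FrobeniusCongruence.

Definition pow_image (gT : finGroupType) (m : nat) (Y : {set gT}) : {set gT} :=
  [set (x ^+ m)%g | x in Y].

Lemma pow_imageM (gT : finGroupType) a b (Y : {set gT}) :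
  pow_image (a * b) Y = pow_image b (pow_image a Y).
Proof.
apply/setP => z; apply/imsetP/imsetP => [[x xY ->]|[w /imsetP[x xY ->] ->]].
  by exists (x ^+ a)%g; [apply/imsetP; exists x | rewrite expgM].
by exists x => //; rewrite expgM.
Qed.

Lemma pow_image1 (gT : finGroupType) (Y : {set gT}) : pow_image 1 Y = Y.
Proof. by apply/setP => z; rewrite /pow_image (eq_imset _ (@expg1 _)) imset_id. Qed.

(* For m coprime to |G|, the power map is injective on G, so every z has at
   most one m-th root in Y, namely exactly when z lies in the image. *)
Lemma card_pow_roots (gT : finGroupType) (G : {group gT}) (Y : {set gT}) m z :
  Y \subset G -> coprime #|G| m ->
  #|[set x in Y | (x ^+ m)%g == z]| = (z \in pow_image m Y).
Proof.
move=> sYG cm; have injm := can_in_inj (expgK cm).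
case: (boolP (z \in pow_image m Y)) => [/imsetP[x0 x0Y ->]|zNI].
  transitivity #|[set x0]|; last by rewrite cards1.
  apply: eq_card => x; rewrite !inE.
  apply/andP/eqP => [[xY /eqP]|->]; last by rewrite x0Y eqxx.
  exact: injm (subsetP sYG _ xY) (subsetP sYG _ x0Y).
apply/eqP; rewrite cards_eq0; apply/eqP/setP => x; rewrite !inE.
apply/negbTE/andP => -[xY /eqP xz]; case/negP: zNI.
by rewrite -xz; apply/imsetP; exists x.
Qed.

Lemma pow_image_sub (gT : finGroupType) (G : {group gT}) m (Y : {set gT}) :
  coprime #|G| m -> Y \subset G :\ 1%g -> pow_image m Y \subset G :\ 1%g.
Proof.
move=> cm sY; apply/subsetP => _ /imsetP[x xY ->].
have /setD1P[nx1 xG] := subsetP sY _ xY.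
rewrite !inE groupX // andbT; apply: contra nx1 => /eqP xm1.
by apply/eqP/(can_in_inj (expgK cm) xG (group1 G)); rewrite xm1 expg1n.
Qed.

Section PartitionBlocks.
Variables (gT : finGroupType) (G : {group gT}) (P : {set {set gT}}).
Hypothesis partP : partition P (G :\ 1%g).

Lemma block_sub B : B \in P -> B \subset G :\ 1%g.
Proof. by case/and3P: partP => /eqP <- _ _; apply: bigcup_sup. Qed.

Lemma block_eq A B z : A \in P -> B \in P -> z \in A -> z \in B -> A = B.
Proof.
case/and3P: partP => _ /trivIsetP tI _ AP BP zA zB.
apply/eqP; apply/negPn/negP => nAB.
by have := disjointFr (tI _ _ AP BP nAB) zA; rewrite zB.
Qed.

Lemma block_exists z : z \in G :\ 1%g -> exists2 B, B \in P & z \in B.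
Proof. by case/and3P: partP => /eqP <- _ _ /bigcupP[B BP zB]; exists B. Qed.

Definition saturated (Y : {set gT}) : Prop :=
  forall B, B \in P -> forall z w, z \in B -> w \in B -> (z \in Y) = (w \in Y).

Lemma block_saturated A : A \in P -> saturated A.
Proof.
move=> AP B BP z w zB wB.
apply/idP/idP => [zA|wA]; first by rewrite (block_eq AP BP zA zB).
by rewrite (block_eq AP BP wA wB).
Qed.

Lemma span_const f B z w : in_span P f -> B \in P -> z \in B -> w \in B ->
  f z = f w.
Proof.
case=> c0 [c fE] BP zB wB.
suff fB v : v \in B -> f v = c B by rewrite !fB.
move=> vB; have /setD1P[/negbTE v1 _] := subsetP (block_sub BP) _ vB.
rewrite fE /grone v1 mulr0 add0r (bigD1 B) //= big1 ?addr0 /grsum ?vB ?mulr1 //.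
move=> A /andP[AP nAB]; case: (boolP (v \in A)) => vA; last by rewrite mulr0.
by rewrite (block_eq AP BP vA vB) eqxx in nAB.
Qed.

Lemma span_saturated (Y : {set gT}) :
  Y \subset G :\ 1%g -> saturated Y -> in_span P (grsum Y).
Proof.
move=> sY satY; exists 0%R, (fun B : {set gT} => Posz (B \subset Y)) => z.
rewrite mul0r add0r.
have notin_other B0 : B0 \in P -> z \in B0 ->
    (\sum_(A in P | A != B0) Posz (A \subset Y) * grsum A z = 0)%R.
  move=> B0P zB0; apply: big1 => A /andP[AP nAB].
  rewrite /grsum; case: (boolP (z \in A)) => zA; last by rewrite mulr0.
  by rewrite (block_eq AP B0P zA zB0) eqxx in nAB.
case: (boolP (z \in G :\ 1%g)) => zG.
  have [B0 B0P zB0] := block_exists zG.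
  rewrite (bigD1 B0) //= notin_other // addr0 /grsum zB0 mulr1.
  congr (Posz (nat_of_bool _)); apply/idP/subsetP => [zY w wB0|]; last exact.
  by rewrite -(satY _ B0P z w zB0 wB0).
rewrite /grsum big1 => [|A AP].
  by case: (boolP (z \in Y)) => // /(subsetP sY); rewrite (negbTE zG).
case: (boolP (z \in A)) => zA; last by rewrite mulr0.
by rewrite (subsetP (block_sub AP) _ zA) in zG.
Qed.
End PartitionBlocks.

Section UnitalPowers.
Variables (gT : finGroupType) (G : {group gT}) (P : {set {set gT}}).
Hypotheses (unitalP : unital_partition G P) (abG : abelian G).

Let partP : partition P (G :\ 1%g) := unitalP.1.

Lemma span_grpow (Y : {set gT}) j :
  Y \subset G :\ 1%g -> saturated P Y -> in_span P (grpow G Y j).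
Proof.
move=> sY satY; elim: j => [|j IH] /=.
  by exists 1%R, (fun _ => 0%R) => z; rewrite mul1r big1 ?addr0.
exact: unitalP.2 (span_saturated partP sY satY) IH.
Qed.

(* Prime exponents: compare the coefficients of a_Y^q at two points of a
   block and reduce mod q with the Frobenius congruence. *)
Lemma saturated_pow_prime (Y : {set gT}) q : prime q -> coprime #|G| q ->
  Y \subset G :\ 1%g -> saturated P Y -> saturated P (pow_image q Y).
Proof.
move=> prime_q cq sY satY B BP z w zB wB.
have sYG : Y \subset G := subset_trans sY (subsetDl _ _).
have := span_const partP (span_grpow q sY satY) BP zB wB.
rewrite !grpow_card // => -[eq_card_zw].
case: q prime_q cq eq_card_zw => [|[|r]] // prime_q cq eq_card_zw.
have := card_prod_tuples_mod abG sYG prime_q z.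
rewrite eq_card_zw (card_prod_tuples_mod abG) // !(card_pow_roots _ sYG cq).
by case: (z \in _) (w \in _) => [] []; rewrite ?modn_small.
Qed.

Lemma saturated_pow m (Y : {set gT}) : 0 < m -> coprime #|G| m ->
  Y \subset G :\ 1%g -> saturated P Y -> saturated P (pow_image m Y).
Proof.
elim/ltn_ind: m Y => m IH Y m_gt0 cm sY satY.
case: (ltngtP m 1) => [|m_gt1|->]; last by rewrite pow_image1.
  by rewrite ltnS leqn0 => /eqP m0; rewrite m0 in m_gt0.
have prime_q := pdiv_prime m_gt1; have dvd_qm := pdiv_dvd m.
have mE : m = (m %/ pdiv m) * pdiv m by rewrite divnK.
have cm' : coprime #|G| (m %/ pdiv m).
  by apply: coprime_dvdr cm; apply/dvdnP; exists (pdiv m); rewrite mulnC -mE.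
rewrite mE pow_imageM; apply: saturated_pow_prime => //.
- exact: coprime_dvdr dvd_qm cm.
- exact: pow_image_sub.
apply: IH => //; first by rewrite ltn_Pdiv ?prime_gt1.
by rewrite divn_gt0 ?prime_gt0 // dvdn_leq.
Qed.

Lemma block_pow_image_eq A m y : A \in P -> 0 < m -> coprime #|G| m ->
  y \in A -> (y ^+ m)%g \in A -> pow_image m A = A.
Proof.
move=> AP m_gt0 cm yA ymA.
have sA := block_sub partP AP; have sAG := subset_trans sA (subsetDl _ _).
have satA := saturated_pow m_gt0 cm sA (block_saturated partP AP).
have subA : A \subset pow_image m A.
  by apply/subsetP => w wA; rewrite -(satA A AP _ _ ymA wA); apply/imsetP; exists y.
apply/eqP; rewrite eq_sym eqEcard subA card_in_imset ?leqnn // => x1 x2 x1A x2A.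
by apply: (can_in_inj (expgK cm)); apply: (subsetP sAG).
Qed.
End UnitalPowers.

(* If x |-> x^(a^u) maps A onto itself and u is the least positive exponent
   with y^(a^u) in A, then u divides every D with y^(a^D) = y: otherwise
   y^(a^(D mod u)) would be sent into A by a power of x |-> x^(a^u). *)
Lemma pow_orbit_period_dvd (gT : finGroupType) (G : {group gT}) (A : {set gT})
    y a u D : A \subset G -> y \in A -> coprime #|G| a -> 0 < u ->
  pow_image (a ^ u) A = A -> (y ^+ (a ^ D))%g = y ->
  (forall v, 0 < v < u -> (y ^+ (a ^ v))%g \notin A) -> u %| D.
Proof.
move=> sAG yA ca u_gt0 permA yD ymin.
have cm : coprime #|G| (a ^ u) by rewrite coprimeXr.
have yG := subsetP sAG _ yA.
have reflect_pow j w : w \in G -> (w ^+ ((a ^ u) ^ j))%g \in A -> w \in A.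
  elim: j w => [|j IH] w wG; first by rewrite expn0 expg1.
  rewrite expnS expgM => /(IH _ (groupX _ wG)).
  rewrite -{1}permA => /imsetP[x xA xE].
  by rewrite (can_in_inj (expgK cm) wG (subsetP sAG _ xA) xE).
apply/negPn/negP => Nu_dvdD; have r_gt0 : 0 < D %% u by rewrite lt0n.
have /negP[] : (y ^+ (a ^ (D %% u)))%g \notin A by rewrite ymin ?r_gt0 ?ltn_pmod.
apply: (reflect_pow (D %/ u)); first exact: groupX.
by rewrite -expgM -!expnM -expnD addnC mulnC -divn_eq yD.
Qed.

Lemma zpow_expE (gT : finGroupType) (N : nat) (y : gT) (alpha : int) v :
  0 < N -> (y ^+ N)%g = 1%g ->
  zpow N y (alpha ^+ v)%R = (y ^+ (`|(alpha %% N%:Z)%Z|%N ^ v))%g.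
Proof.
move=> N_gt0 yN; rewrite /zpow -modzXm.
have [b ->] : exists b : nat, (alpha %% N%:Z)%Z = b.
  by exists `|(alpha %% N%:Z)%Z|%N; rewrite gez0_abs // modz_ge0 // -lt0n.
have -> : (Posz b ^+ v)%R = Posz (b ^ v) by rewrite -!natz natrX.
by rewrite modz_nat /= expg_mod.
Qed.

Lemma coprime_modz (alpha : int) (N : nat) :
  coprimez alpha N%:Z -> coprime `|(alpha %% N%:Z)%Z|%N N.
Proof. by rewrite /coprimez -gcdz_modl. Qed.

Lemma Bset_exp_order (gT : finGroupType) (G : {group gT}) p n k y :
  #|G| = (p ^ n)%N -> (k <= n)%N -> y \in Bset G p k ->
  (y ^+ (p ^ (n - k)))%g = 1%g.
Proof.
move=> cardG kn /imsetP[x]; rewrite inE => /andP[xG _] ->.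
by rewrite -expgM -expnD subnKC // -cardG expg_cardG.
Qed.

Theorem mainTheorem6 (gT : finGroupType) (G : {group gT}) (p n : nat)
  (alpha : int) (P : {set {set gT}}) (k : nat) (A : {set gT}) (y : gT) (u : nat) :
  prime p -> odd p -> (1 <= n)%N ->
  cyclic G -> #|G| = (p ^ n)%N ->
  generates_units (p ^ n) alpha ->
  unital_partition G P ->
  (k <= n)%N ->
  A \in Pk G P p k ->
  y \in A :&: Bset G p k ->
  (0 < u)%N ->
  zpow (p ^ n) y (alpha ^+ u)%R \in A ->
  (forall v : nat, (0 < v < u)%N -> zpow (p ^ n) y (alpha ^+ v)%R \notin A) ->
  (u %| totient (p ^ (n - k)))%N.
Proof.
move=> prime_p _ n_gt0 cycG cardG [cop_alpha _] unitalP kn APk /setIP[yA yB].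
move=> u_gt0 yuA ymin; have AP : A \in P by case/setIdP: APk.
have sAG := subset_trans (block_sub unitalP.1 AP) (subsetDl _ _).
have yN : (y ^+ (p ^ n))%g = 1%g by rewrite -cardG expg_cardG ?(subsetP sAG).
have pn_gt0 : 0 < p ^ n by rewrite expn_gt0 prime_gt0.
have zpowE v := zpow_expE alpha v pn_gt0 yN.
set a := `|(alpha %% (p ^ n)%:Z)%Z|%N in zpowE.
have cap : coprime a p by rewrite -(coprime_pexpr _ _ n_gt0) coprime_modz.
have caG : coprime #|G| a by rewrite cardG coprime_sym coprimeXr.
have a_gt0 : 0 < a.
  rewrite lt0n; apply: contraTneq cap => ->.
  by rewrite /coprime gcd0n neq_ltn prime_gt1 ?orbT.
have permA : pow_image (a ^ u) A = A.
  apply: (block_pow_image_eq unitalP (cyclic_abelian cycG) AP _ _ yA).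
  - by rewrite expn_gt0 a_gt0.
  - by rewrite coprimeXr.
  - by rewrite -zpowE.
apply: pow_orbit_period_dvd sAG yA caG u_gt0 permA _ _.
  have yM := Bset_exp_order cardG kn yB.
  by rewrite -(expg_mod _ yM) Euler_exp_totient ?coprimeXr // expg_mod.
by move=> v /ymin; rewrite zpowE.
Qed.
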